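(* Let $I\subset\mathbb{R}$ be an open interval and $\lambda:I\to\mathbb{R}$ a non-constant positive smooth function, and fix a choice of sign $\pm$. Let $\tilde M(1-\lambda^2,2(1\pm\lambda))$ be the contact metric $3$-manifold described in the context. For constants $b\in\mathbb{R}$ and $c\in I$, consider the curve $\gamma_{\{b,c\}}(s)=(b,s,c)$ in $\tilde M(1-\lambda^2,2(1\pm\lambda))$ (it is parametrized by arclength, is a Legendre curve, and its unit tangent is $e_2$). Then $\gamma_{\{b,c\}}$ is proper biharmonic if and only if $\lambda'(c)\neq 0$ and $$\Big(\lambda\lambda''-2(\lambda')^2-8\lambda^2(1\pm\lambda)\Big)\Big|_{z=c}=0,$$ where $'$ denotes $d/dz$ and the sign $\pm$ is the same as the one in $\tilde M(1-\lambda^2,2(1\pm\lambda))$.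
   Context: Definition of $\tilde M(1-\lambda^2,2(1\pm\lambda))$: Let $\lambda:I\to\mathbb{R}$ be a non-constant positive smooth function on an open interval $I$, $\lambda'=d\lambda/dz$. On $\tilde M^3=\mathbb{R}^2\times I\subset\mathbb{R}^3$ with coordinates $(x,y,z)$ consider the vector fields $e_1=\partial_x$, $e_2=\partial_y$, $e_3=(\pm 2y+f(z))\partial_x+\big(2\lambda x-\frac{\lambda'}{2\lambda}y+h(z)\big)\partial_y+\partial_z$, where $f,h$ are arbitrary smooth functions of $z$. Let $g$ be the Riemannian metric with $g(e_i,e_j)=\delta_{ij}$, $\xi=e_1$, $\eta$ the $1$-form dual to $e_1$, and $\phi$ the $(1,1)$-tensor with $\phi e_1=0$, $\phi e_2=\pm e_3$, $\phi e_3=\mp e_2$ (all double signs correspond to the sign in $\pm 2y$). This is a contact metric manifold which is a generalized $(\kappa,\mu)$-manifold with $\kappa=1-\lambda^2$, $\mu=2(1\pm\lambda)$, i.e. its curvature tensor $\tilde R(X,Y)=[\tilde\nabla_X,\tilde\nabla_Y]-\tilde\nabla_{[X,Y]}$ satisfies $\tilde R(X,Y)\xi=(\kappa I+\mu h)(\eta(Y)X-\eta(X)Y)$, where $2h$ is the Lie derivative of $\phi$ along $\xi$. A curve parametrized by arclength in a contact metric $3$-manifold is Legendre if $\eta(\gamma')=0$. A smooth map $f:M\to\tilde M$ is biharmonic if its bitension field $\tau_2(f)=-\Delta_f\tau(f)+\mathrm{trace}\,\tilde R(\tau(f),df)df$ vanishes, where $\tau(f)$ is the tension field and $\Delta_f=-\mathrm{trace}(\nabla^f\nabla^f-\nabla^f_\nabla)$;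 an isometric immersion is biharmonic if it is a biharmonic map, and proper biharmonic if it is biharmonic and not minimal (for a curve: not a geodesic). For a curve parametrized by arclength with unit tangent $T$, biharmonicity is $\tilde\nabla_T\tilde\nabla_T\tilde\nabla_T T+\tilde R(\tilde\nabla_T T,T)T=0$. *)

From Stdlib Require Import Reals Lra Classical ClassicalEpsilon.
Open Scope R_scope.

(* [deriv f x] is THE derivative of f at x when f is differentiable at x
   (derivable_pt_lim has unique limits), and 0 otherwise. *)
Definition deriv (f : R -> R) (x : R) : R :=
  match excluded_middle_informative (exists l, derivable_pt_lim f x l) with
  | left H => proj1_sig (constructive_indefinite_description _ H)
  | right _ => 0
  end.

(* lo = None means -infinity, hi = None means +infinity. *)
Definition in_I (lo hi : option R) (z : R) : Prop :=
  (match lo with None => True | Some a => a < z end) /\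
  (match hi with None => True | Some b => z < b end).

Definition interval_nonempty (lo hi : option R) : Prop :=
  match lo, hi with Some a, Some b => a < b | _, _ => True end.

Definition smooth_on (lo hi : option R) (f : R -> R) : Prop :=
  forall (n : nat) (z : R), in_I lo hi z ->
    derivable_pt_lim (Nat.iter n deriv f) z (Nat.iter (S n) deriv f z).

(* Points and vectors of R^3 are [nat -> R], coordinates 0,1,2 = x,y,z. *)
Definition Vec := nat -> R.
Definition sum3 (F : nat -> R) : R := F 0%nat + F 1%nat + F 2%nat.

Definition upd (p : Vec) (a : nat) (t : R) : Vec :=
  fun k => if Nat.eqb k a then t else p k.

Definition pd (a : nat) (F : Vec -> R) (p : Vec) : R :=
  deriv (fun t => F (upd p a t)) (p a).

Definition pt (x y z : R) : Vec :=
  fun k => match k with 0%nat => x | 1%nat => y | _ => z end.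

Definition cof3 (M : nat -> nat -> R) (i j : nat) : R :=
  M ((i+1) mod 3)%nat ((j+1) mod 3)%nat * M ((i+2) mod 3)%nat ((j+2) mod 3)%nat
  - M ((i+1) mod 3)%nat ((j+2) mod 3)%nat * M ((i+2) mod 3)%nat ((j+1) mod 3)%nat.
Definition det3 (M : nat -> nat -> R) : R := sum3 (fun j => M 0%nat j * cof3 M 0%nat j).
Definition inv3 (M : nat -> nat -> R) (a b : nat) : R := cof3 M b a / det3 M.

(* sg = +1 or -1 is the sign choice.  E i p = coordinate components of the
   frame vector e_{i+1} at the point p (i = 0,1,2). *)
Definition frame (sg : R) (lam f h : R -> R) (i : nat) (p : Vec) : Vec :=
  match i with
  | 0%nat => pt 1 0 0
  | 1%nat => pt 0 1 0
  | _ => pt (sg * 2 * p 1%nat + f (p 2%nat))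
            (2 * lam (p 2%nat) * p 0%nat
               - deriv lam (p 2%nat) / (2 * lam (p 2%nat)) * p 1%nat + h (p 2%nat))
            1
  end.

(* matrix whose columns are the frame vectors; its inverse has the dual
   coframe theta^i as rows *)
Definition frame_mat sg lam f h (p : Vec) (a i : nat) : R := frame sg lam f h i p a.

(* Riemannian metric g with g(e_i,e_j) = delta_ij, in coordinates:
   g_ab = sum_i theta^i_a theta^i_b *)
Definition metric sg lam f h (a b : nat) (p : Vec) : R :=
  sum3 (fun i => inv3 (frame_mat sg lam f h p) i a * inv3 (frame_mat sg lam f h p) i b).

Definition metric_inv sg lam f h (a b : nat) (p : Vec) : R :=
  sum3 (fun i => frame sg lam f h i p a * frame sg lam f h i p b).

(* Christoffel symbols of the Levi-Civita connection:
   nabla_{d_i} d_j = sum_k Gamma^k_ij d_k *)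
Definition christoffel sg lam f h (k i j : nat) (p : Vec) : R :=
  / 2 * sum3 (fun l => metric_inv sg lam f h k l p *
     (pd i (metric sg lam f h j l) p + pd j (metric sg lam f h i l) p
      - pd l (metric sg lam f h i j) p)).

(* Curvature R(X,Y) = [nabla_X, nabla_Y] - nabla_[X,Y]:
   R(d_i, d_j) d_k = sum_l riem l k i j d_l *)
Definition riem sg lam f h (l k i j : nat) (p : Vec) : R :=
  pd i (christoffel sg lam f h l j k) p - pd j (christoffel sg lam f h l i k) p
  + sum3 (fun m => christoffel sg lam f h m j k p * christoffel sg lam f h l i m p
                   - christoffel sg lam f h m i k p * christoffel sg lam f h l j m p).

Definition curv sg lam f h (X Y Z : Vec) (p : Vec) : Vec :=
  fun l => sum3 (fun i => sum3 (fun j => sum3 (fun k =>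
             X i * Y j * Z k * riem sg lam f h l k i j p))).

Definition velocity (gamma : R -> Vec) (s : R) : Vec :=
  fun a => deriv (fun u => gamma u a) s.

Definition cov_along sg lam f h (gamma : R -> Vec) (V : R -> Vec) (s : R) : Vec :=
  fun a => deriv (fun u => V u a) s
    + sum3 (fun i => sum3 (fun j =>
        christoffel sg lam f h a i j (gamma s) * velocity gamma s i * V s j)).

(* biharmonic equation for an arclength-parametrized curve with T = gamma':
   nabla_T nabla_T nabla_T T + R(nabla_T T, T) T = 0 *)
Definition biharmonic_curve sg lam f h (gamma : R -> Vec) : Prop :=
  let T := velocity gamma in
  let nT := cov_along sg lam f h gamma T in
  let n2T := cov_along sg lam f h gamma nT in
  let n3T := cov_along sg lam f h gamma n2T in
  forall (s : R) (a : nat), (a < 3)%nat ->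
    n3T s a + curv sg lam f h (nT s) (T s) (T s) (gamma s) a = 0.

Definition geodesic_curve sg lam f h (gamma : R -> Vec) : Prop :=
  forall (s : R) (a : nat), (a < 3)%nat ->
    cov_along sg lam f h gamma (velocity gamma) s a = 0.

Definition proper_biharmonic_curve sg lam f h gamma : Prop :=
  biharmonic_curve sg lam f h gamma /\ ~ geodesic_curve sg lam f h gamma.

Definition gamma_bc (b c : R) (s : R) : Vec := pt b s c.

From Stdlib Require Import Reals Lra Lia FunctionalExtensionality ClassicalEpsilon.
Open Scope R_scope.

(** In coordinates, the metric, its inverse, the Christoffel symbols and the
    curvature of this frame are polynomials in [x], [y], [z], [1/(2 lam z)], the sign
    and the derivatives of [lam], [f], [h] at [z].  Reflecting such polynomials as
    syntax with a verified symbolic derivative, the covariant derivatives along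
    [gamma_bc b c] are obtained by evaluation and simplify to
      [nabla_T T = (lam'/(2 lam)) e3],
      [tau_2 = (lam'/(2 lam)) (lam lam'' - 2 lam'^2 - 8 lam^2 (1 + sg lam))/(2 lam^2) e3],
    evaluated at [z = c].  As the [z]-component of [e3] is [1], the curve is a
    geodesic iff [lam'(c) = 0] and biharmonic iff the product of [lam'(c)] with the
    bracket vanishes. *)

Lemma deriv_unique f x l : derivable_pt_lim f x l -> deriv f x = l.
Proof.
  intro H. unfold deriv. destruct excluded_middle_informative as [e|n].
  - destruct (constructive_indefinite_description _ e) as [l' Hl']; simpl.
    exact (uniqueness_limite f x l' l Hl' H).
  - exfalso; apply n; exists l; exact H.
Qed.

Lemma deriv_ext f g x : (forall u, f u = g u) -> deriv f x = deriv g x.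
Proof. intro H. apply functional_extensionality in H. now subst. Qed.

Lemma in_I_locally lo hi z : in_I lo hi z ->
  exists u v, u < z < v /\ forall t, u < t < v -> in_I lo hi t.
Proof.
  intros [Hlo Hhi].
  exists (match lo with None => z - 1 | Some a => a end),
         (match hi with None => z + 1 | Some b => b end).
  split; [destruct lo, hi; lra|].
  intros t Ht. split; [destruct lo | destruct hi]; simpl; tauto || lra.
Qed.

Lemma derivable_pt_lim_inv_double f z l : f z <> 0 -> derivable_pt_lim f z l ->
  derivable_pt_lim (fun t => / (2 * f t)) z (- (2 * l * (/ (2 * f z) * / (2 * f z)))).
Proof.
  intros Hz Hf.
  assert (H2f : derivable_pt_lim (fun t => 2 * f t) z (2 * l)).
  { replace (2 * l) with (0 * f z + 2 * l) by ring.
    exact (derivable_pt_lim_mult (fct_cte 2) f z 0 l (derivable_pt_lim_const 2 z) Hf). }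
  pose proof (derivable_pt_lim_div (fct_cte 1) (fun t => 2 * f t) z 0 _
                (derivable_pt_lim_const 1 z) H2f ltac:(lra)) as Hdiv.
  apply (derivable_pt_lim_ext (fun t => fct_cte 1 t / (2 * f t))).
  { intro t. unfold fct_cte, Rdiv. ring. }
  replace (- (2 * l * (/ (2 * f z) * / (2 * f z))))
    with ((0 * (2 * f z) - 2 * l * fct_cte 1 z) / (2 * f z)²)
    by (unfold fct_cte, Rsqr; field; lra).
  exact Hdiv.
Qed.

Lemma upd_same (p : Vec) a : upd p a (p a) = p.
Proof.
  apply functional_extensionality. intro k. unfold upd.
  destruct (Nat.eqb_spec k a); congruence.
Qed.

(** [Ainv] stands for [/ (2 * lam z)], [Asg] for the sign, and [Ader k n] for the
    [n]-th derivative at [z] of the [k]-th of [lam], [f], [h]. *)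
Inductive atom := Ax | Ay | Az | Ainv | Asg | Ader (k n : nat).

Inductive expr :=
  | Var (a : atom) | Cst (z : Z) | Half
  | Add (x y : expr) | Mul (x y : expr) | Opp (x : expr).

Fixpoint eval (env : atom -> R) (e : expr) : R :=
  match e with
  | Var a => env a
  | Cst z => IZR z
  | Half => / 2
  | Add x y => eval env x + eval env y
  | Mul x y => eval env x * eval env y
  | Opp x => - eval env x
  end.

(* Smart constructors simplifying by 0 and 1 keep the computed expressions small. *)
Definition add_s (x y : expr) : expr :=
  match x with Cst Z0 => y | _ => match y with Cst Z0 => x | _ => Add x y end end.

Definition mul_s (x y : expr) : expr :=
  match x with
  | Cst Z0 => Cst Z0
  | Cst (Zpos xH) => y
  | _ => match y with Cst Z0 => Cst Z0 | Cst (Zpos xH) => x | _ => Mul x y end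
  end.

Definition opp_s (x : expr) : expr := match x with Cst Z0 => Cst Z0 | _ => Opp x end.

Lemma eval_add_s env x y : eval env (add_s x y) = eval env x + eval env y.
Proof. destruct x as [|[]| | | |]; destruct y as [|[]| | | |]; simpl; ring. Qed.

Lemma eval_mul_s env x y : eval env (mul_s x y) = eval env x * eval env y.
Proof.
  destruct x as [|[|[]|]| | | |]; destruct y as [|[|[]|]| | | |]; simpl; ring.
Qed.

Lemma eval_opp_s env x : eval env (opp_s x) = - eval env x.
Proof. destruct x as [|[]| | | |]; simpl; ring. Qed.

Definition sum3E (F : nat -> expr) : expr := add_s (add_s (F 0%nat) (F 1%nat)) (F 2%nat).

Fixpoint sderiv (dv : atom -> expr) (e : expr) : expr :=
  match e with
  | Var a => dv a
  | Cst _ | Half => Cst 0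
  | Add x y => add_s (sderiv dv x) (sderiv dv y)
  | Mul x y => add_s (mul_s (sderiv dv x) y) (mul_s x (sderiv dv y))
  | Opp x => opp_s (sderiv dv x)
  end.

Lemma derivable_pt_lim_sderiv (E : R -> atom -> R) x dv :
  (forall v, derivable_pt_lim (fun t => E t v) x (eval (E x) (dv v))) ->
  forall e, derivable_pt_lim (fun t => eval (E t) e) x (eval (E x) (sderiv dv e)).
Proof.
  intros Hv e; induction e; simpl.
  - apply Hv.
  - apply derivable_pt_lim_const.
  - apply derivable_pt_lim_const.
  - rewrite eval_add_s. exact (derivable_pt_lim_plus _ _ _ _ _ IHe1 IHe2).
  - rewrite eval_add_s, !eval_mul_s.
    exact (derivable_pt_lim_mult _ _ _ _ _ IHe1 IHe2).
  - rewrite eval_opp_s. exact (derivable_pt_lim_opp _ _ _ IHe).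
Qed.

(* [(1/(2 lam))' = - 2 lam' (1/(2 lam))^2]. *)
Definition datom (a : nat) (v : atom) : expr :=
  match a, v with
  | 0%nat, Ax | 1%nat, Ay => Cst 1
  | S (S _), Az => Cst 1
  | S (S _), Ainv => Opp (Mul (Mul (Cst 2) (Var (Ader 0 1))) (Mul (Var Ainv) (Var Ainv)))
  | S (S _), Ader k n => Var (Ader k (S n))
  | _, _ => Cst 0
  end.

Definition coordE (a : nat) : expr :=
  match a with 0%nat => Var Ax | 1%nat => Var Ay | _ => Var Az end.

Definition e3xE : expr := Add (Mul (Mul (Var Asg) (Cst 2)) (Var Ay)) (Var (Ader 1 0)).
Definition e3yE : expr :=
  Add (Add (Mul (Mul (Cst 2) (Var (Ader 0 0))) (Var Ax))
           (Opp (Mul (Mul (Var (Ader 0 1)) (Var Ainv)) (Var Ay))))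
      (Var (Ader 2 0)).
Definition e3E (a : nat) : expr :=
  match a with 0%nat => e3xE | 1%nat => e3yE | _ => Cst 1 end.

(* With [e3 = A d_x + B d_y + d_z], the coframe is [dx - A dz, dy - B dz, dz]. *)
Definition metricE (j l : nat) : expr :=
  match j, l with
  | 0, 0 | 1, 1 => Cst 1
  | 0, 1 | 1, 0 => Cst 0
  | 0, _ | _, 0 => Opp e3xE
  | 1, _ | _, 1 => Opp e3yE
  | _, _ => Add (Add (Cst 1) (Mul e3xE e3xE)) (Mul e3yE e3yE)
  end%nat.

Definition metric_invE (j l : nat) : expr :=
  match j, l with
  | 0, 0 => Add (Cst 1) (Mul e3xE e3xE)
  | 1, 1 => Add (Cst 1) (Mul e3yE e3yE)
  | 0, 1 | 1, 0 => Mul e3xE e3yE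
  | 0, _ | _, 0 => e3xE
  | 1, _ | _, 1 => e3yE
  | _, _ => Cst 1
  end%nat.

Definition christoffelE (k i j : nat) : expr :=
  let dg i j l := sderiv (datom i) (metricE j l) in
  mul_s Half (sum3E (fun l => mul_s (metric_invE k l)
    (add_s (add_s (dg i j l) (dg j i l)) (opp_s (dg l i j))))).

Definition riemE (l k i j : nat) : expr :=
  add_s (add_s (sderiv (datom i) (christoffelE l j k))
               (opp_s (sderiv (datom j) (christoffelE l i k))))
    (sum3E (fun m => add_s (mul_s (christoffelE m j k) (christoffelE l i m))
                           (opp_s (mul_s (christoffelE m i k) (christoffelE l j m))))).

Definition tangentE (a : nat) : expr := sderiv (datom 1) (coordE a).

Definition cov_alongE (WE : nat -> expr) (a : nat) : expr :=
  add_s (sderiv (datom 1) (WE a))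
    (sum3E (fun i => sum3E (fun j => mul_s (mul_s (christoffelE a i j) (tangentE i)) (WE j)))).

Definition curvE (XE YE ZE : nat -> expr) (l : nat) : expr :=
  sum3E (fun i => sum3E (fun j => sum3E (fun k =>
    mul_s (mul_s (mul_s (XE i) (YE j)) (ZE k)) (riemE l k i j)))).

Definition tensionE : nat -> expr := cov_alongE tangentE.

Definition bitensionE (a : nat) : expr :=
  add_s (cov_alongE (cov_alongE tensionE) a) (curvE tensionE tangentE tangentE a).

Definition kappaE : expr := Mul (Var (Ader 0 1)) (Var Ainv).

Definition bih_factorE : expr :=
  Add (Add (Add (Mul (Var (Ader 0 2)) (Var Ainv))
                (Opp (Mul (Cst 4) (Mul (Mul (Var (Ader 0 1)) (Var (Ader 0 1)))
                                       (Mul (Var Ainv) (Var Ainv))))))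
           (Cst (-4)))
      (Opp (Mul (Mul (Cst 4) (Var Asg)) (Var (Ader 0 0)))).

Ltac compute_in e := let t := eval vm_compute in e in change e with t.

Lemma eval_tensionE env a : (a < 3)%nat ->
  eval env (tensionE a) = eval env (Mul kappaE (e3E a)).
Proof.
  intro Ha. destruct a as [|[|[|a]]]; [| | | lia];
  match goal with |- eval _ (tensionE ?a) = _ => compute_in (tensionE a) end;
  cbn [eval e3E kappaE e3xE e3yE]; field.
Qed.

(* The value [sg ^ 2 = 1] of the sign enters the cancellations. *)
Lemma eval_bitensionE env a : (a < 3)%nat -> (env Asg = 1 \/ env Asg = -1) ->
  eval env (bitensionE a) = eval env (Mul (Mul kappaE bih_factorE) (e3E a)).
Proof.
  intros Ha [Hs | Hs];
  (destruct a as [|[|[|a]]]; [| | | lia]);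
  (match goal with |- eval _ (bitensionE ?a) = _ => compute_in (bitensionE a) end);
  cbn [eval e3E kappaE bih_factorE e3xE e3yE]; rewrite Hs; field.
Qed.

Ltac destruct_lt3 i := destruct i as [|[|[|i]]]; [| | | exfalso; lia].

Section Frame.

Variables (sg : R) (lo hi : option R) (lam f h : R -> R).
Hypotheses (Hlam : smooth_on lo hi lam) (Hf : smooth_on lo hi f) (Hh : smooth_on lo hi h)
  (Hpos : forall z, in_I lo hi z -> 0 < lam z).

Definition coef (k : nat) : R -> R :=
  match k with 0%nat => lam | 1%nat => f | _ => h end.

Definition env (p : Vec) (v : atom) : R :=
  match v with
  | Ax => p 0%nat | Ay => p 1%nat | Az => p 2%nat
  | Ainv => / (2 * lam (p 2%nat))
  | Asg => sg
  | Ader k n => Nat.iter n deriv (coef k) (p 2%nat)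
  end.

Definition represents (F : Vec -> R) (e : expr) : Prop :=
  forall p, in_I lo hi (p 2%nat) -> F p = eval (env p) e.

Lemma derivable_pt_lim_env_upd a p v : (a < 3)%nat -> in_I lo hi (p 2%nat) ->
  derivable_pt_lim (fun t => env (upd p a t) v) (p a) (eval (env p) (datom a v)).
Proof.
  intros Ha Hp. destruct_lt3 a; destruct v; unfold env, upd; simpl;
    try first [apply derivable_pt_lim_id | apply derivable_pt_lim_const].
  - pose proof (Hpos _ Hp).
    apply derivable_pt_lim_inv_double; [lra | exact (Hlam 0%nat _ Hp)].
  - destruct k as [|[|k]]; [apply Hlam | apply Hf | apply Hh]; exact Hp.
Qed.

Lemma pd_represents a F e p : (a < 3)%nat -> in_I lo hi (p 2%nat) -> represents F e ->
  pd a F p = eval (env p) (sderiv (datom a) e).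
Proof.
  intros Ha Hp HF. unfold pd. apply deriv_unique.
  assert (Hloc : exists u v, u < p a < v /\
            forall t, u < t < v -> in_I lo hi (upd p a t 2%nat)).
  { destruct_lt3 a; simpl.
    - exists (p 0%nat - 1), (p 0%nat + 1). split; [lra | auto].
    - exists (p 1%nat - 1), (p 1%nat + 1). split; [lra | auto].
    - exact (in_I_locally _ _ _ Hp). }
  destruct Hloc as (u & v & Huv & Hin).
  apply (derivable_pt_lim_locally_ext (fun t => eval (env (upd p a t)) e) _ _ u v);
    [exact Huv | intros t Ht; symmetry; apply HF, Hin, Ht |].
  rewrite <- (upd_same p a) at 2.
  apply derivable_pt_lim_sderiv. intro w. rewrite upd_same.
  apply derivable_pt_lim_env_upd; assumption.
Qed.

Lemma det3_frame_mat p : det3 (frame_mat sg lam f h p) = 1.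
Proof. unfold det3, cof3, sum3, frame_mat, frame, pt; simpl. ring. Qed.

Lemma eval_e3E p a : (a < 3)%nat -> eval (env p) (e3E a) = frame sg lam f h 2 p a.
Proof. intro Ha. destruct_lt3 a; simpl; unfold Rdiv; ring. Qed.

Lemma metric_eval j l p : (j < 3)%nat -> (l < 3)%nat ->
  metric sg lam f h j l p = eval (env p) (metricE j l).
Proof.
  intros Hj Hl. unfold metric, inv3. rewrite det3_frame_mat.
  destruct_lt3 j; destruct_lt3 l;
    unfold cof3, sum3, frame_mat, frame, pt, metricE, e3xE, e3yE; simpl;
    unfold Rdiv; rewrite ?Rinv_1; ring.
Qed.

Lemma metric_inv_eval j l p : (j < 3)%nat -> (l < 3)%nat ->
  metric_inv sg lam f h j l p = eval (env p) (metric_invE j l).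
Proof.
  intros Hj Hl. unfold metric_inv.
  destruct_lt3 j; destruct_lt3 l;
    unfold sum3, frame, pt, metric_invE, e3xE, e3yE; simpl; unfold Rdiv; ring.
Qed.

Lemma christoffel_represents k i j : (k < 3)%nat -> (i < 3)%nat -> (j < 3)%nat ->
  represents (christoffel sg lam f h k i j) (christoffelE k i j).
Proof.
  intros Hk Hi Hj p Hp. unfold christoffel, christoffelE, sum3E, sum3. cbv beta.
  repeat rewrite ?eval_mul_s, ?eval_add_s, ?eval_opp_s.
  rewrite !metric_inv_eval by lia.
  rewrite !(pd_represents _ _ _ p) by (auto; try lia; intros q _; apply metric_eval; lia).
  reflexivity.
Qed.

Lemma riem_represents l k i j : (l < 3)%nat -> (k < 3)%nat -> (i < 3)%nat -> (j < 3)%nat ->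
  represents (riem sg lam f h l k i j) (riemE l k i j).
Proof.
  intros Hl Hk Hi Hj p Hp. unfold riem, riemE, sum3E, sum3. cbv beta.
  repeat rewrite ?eval_mul_s, ?eval_add_s, ?eval_opp_s.
  rewrite !(pd_represents _ _ _ p) by (auto; try lia; apply christoffel_represents; lia).
  rewrite !christoffel_represents by (auto; lia).
  reflexivity.
Qed.

Variables (b c : R).
Hypothesis Hc : in_I lo hi c.

Definition represents_along (W : R -> Vec) (WE : nat -> expr) : Prop :=
  forall u a, (a < 3)%nat -> W u a = eval (env (gamma_bc b c u)) (WE a).

Lemma deriv_along e s :
  deriv (fun u => eval (env (gamma_bc b c u)) e) s
  = eval (env (gamma_bc b c s)) (sderiv (datom 1) e).
Proof.
  apply deriv_unique, (derivable_pt_lim_sderiv (fun u => env (gamma_bc b c u))).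
  intro v. destruct v; unfold env, gamma_bc, pt; simpl;
    first [apply derivable_pt_lim_id | apply derivable_pt_lim_const].
Qed.

Lemma velocity_along : represents_along (velocity (gamma_bc b c)) tangentE.
Proof.
  intros u a Ha. unfold velocity, tangentE. rewrite <- deriv_along.
  apply deriv_ext. intro w. destruct_lt3 a; reflexivity.
Qed.

Lemma cov_along_represents W WE : represents_along W WE ->
  represents_along (cov_along sg lam f h (gamma_bc b c) W) (cov_alongE WE).
Proof.
  intros HW u a Ha. unfold cov_along, cov_alongE, sum3E, sum3. cbv beta.
  repeat rewrite ?eval_mul_s, ?eval_add_s, ?eval_opp_s.
  rewrite (deriv_ext _ (fun w => eval (env (gamma_bc b c w)) (WE a)))
    by (intro; apply HW, Ha).
  rewrite deriv_along, !christoffel_represents by (auto; lia).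
  rewrite !velocity_along, !(HW u) by lia.
  reflexivity.
Qed.

Lemma curv_along X XE Y YE Z ZE :
  represents_along X XE -> represents_along Y YE -> represents_along Z ZE ->
  forall u a, (a < 3)%nat ->
  curv sg lam f h (X u) (Y u) (Z u) (gamma_bc b c u) a
  = eval (env (gamma_bc b c u)) (curvE XE YE ZE a).
Proof.
  intros HX HY HZ u a Ha. unfold curv, curvE, sum3E, sum3. cbv beta.
  repeat rewrite ?eval_mul_s, ?eval_add_s, ?eval_opp_s.
  rewrite !riem_represents by (auto; lia).
  rewrite !(HX u), !(HY u), !(HZ u) by lia.
  reflexivity.
Qed.

Hypothesis Hsg : sg = 1 \/ sg = -1.

Definition bih_poly : R :=
  lam c * deriv (deriv lam) c - 2 * deriv lam c ^ 2 - 8 * lam c ^ 2 * (1 + sg * lam c).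

Lemma tension_gamma_bc s a : (a < 3)%nat ->
  cov_along sg lam f h (gamma_bc b c) (velocity (gamma_bc b c)) s a
  = deriv lam c / (2 * lam c) * frame sg lam f h 2 (gamma_bc b c s) a.
Proof.
  intro Ha. rewrite (cov_along_represents _ _ velocity_along) by exact Ha.
  change (cov_alongE tangentE) with tensionE.
  rewrite eval_tensionE by exact Ha. cbn [eval]. rewrite eval_e3E by exact Ha.
  reflexivity.
Qed.

Lemma bitension_gamma_bc s a : (a < 3)%nat ->
  let T := velocity (gamma_bc b c) in
  let nT := cov_along sg lam f h (gamma_bc b c) T in
  cov_along sg lam f h (gamma_bc b c) (cov_along sg lam f h (gamma_bc b c) nT) s a
    + curv sg lam f h (nT s) (T s) (T s) (gamma_bc b c s) a
  = deriv lam c / (2 * lam c) * (bih_poly / (2 * lam c ^ 2))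
    * frame sg lam f h 2 (gamma_bc b c s) a.
Proof.
  intros Ha T nT.
  pose proof (cov_along_represents _ _ velocity_along) as Htension.
  rewrite (cov_along_represents _ _ (cov_along_represents _ _ Htension)) by exact Ha.
  rewrite (curv_along _ _ _ _ _ _ Htension velocity_along velocity_along) by exact Ha.
  transitivity (eval (env (gamma_bc b c s)) (bitensionE a));
    [unfold bitensionE; symmetry; apply eval_add_s |].
  rewrite eval_bitensionE by (exact Ha || exact Hsg).
  cbn [eval]. rewrite eval_e3E by exact Ha.
  pose proof (Hpos c Hc) as Hlamc.
  unfold bih_poly, kappaE, bih_factorE. cbn [eval env gamma_bc pt coef]. simpl Nat.iter.
  field. lra.
Qed.

Lemma along_e3_zero_iff (W : R -> Vec) k :
  (forall s a, (a < 3)%nat -> W s a = k * frame sg lam f h 2 (gamma_bc b c s) a) ->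
  ((forall s a, (a < 3)%nat -> W s a = 0) <-> k = 0).
Proof.
  intro HW. split.
  - intro H0. pose proof (HW 0 2%nat ltac:(lia)) as H2.
    rewrite H0 in H2 by lia. simpl in H2. lra.
  - intros Hk s a Ha. rewrite HW, Hk by exact Ha. ring.
Qed.

Lemma geodesic_gamma_bc_iff :
  geodesic_curve sg lam f h (gamma_bc b c) <-> deriv lam c = 0.
Proof.
  unfold geodesic_curve. rewrite (along_e3_zero_iff _ _ tension_gamma_bc).
  pose proof (Hpos c Hc) as Hlamc.
  split; intro H; [| rewrite H; field; lra].
  replace (deriv lam c) with (deriv lam c / (2 * lam c) * (2 * lam c)) by (field; lra).
  rewrite H. ring.
Qed.

Lemma biharmonic_gamma_bc_iff :
  biharmonic_curve sg lam f h (gamma_bc b c) <-> deriv lam c * bih_poly = 0.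
Proof.
  unfold biharmonic_curve. cbv zeta.
  rewrite (along_e3_zero_iff _ _ bitension_gamma_bc).
  pose proof (Hpos c Hc) as Hlamc.
  split; intro H; [| field_simplify; [rewrite H |]; lra].
  replace (deriv lam c * bih_poly)
    with (deriv lam c / (2 * lam c) * (bih_poly / (2 * lam c ^ 2)) * (4 * lam c ^ 3))
    by (field; lra).
  rewrite H. ring.
Qed.

End Frame.

Theorem proposition5p1 (sg : R) (lo hi : option R) (lam f h : R -> R) (b c : R) :
  (sg = 1 \/ sg = -1) ->
  interval_nonempty lo hi ->
  smooth_on lo hi lam -> smooth_on lo hi f -> smooth_on lo hi h ->
  (forall z, in_I lo hi z -> 0 < lam z) ->
  (exists z1 z2, in_I lo hi z1 /\ in_I lo hi z2 /\ lam z1 <> lam z2) ->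
  in_I lo hi c ->
  (proper_biharmonic_curve sg lam f h (gamma_bc b c) <->
   (deriv lam c <> 0 /\
    lam c * deriv (deriv lam) c - 2 * (deriv lam c) ^ 2
      - 8 * (lam c) ^ 2 * (1 + sg * lam c) = 0)).
Proof.
  intros Hsg _ Hlam Hf Hh Hpos _ Hc.
  unfold proper_biharmonic_curve.
  rewrite (biharmonic_gamma_bc_iff sg lo hi lam f h Hlam Hf Hh Hpos b c Hc Hsg),
          (geodesic_gamma_bc_iff sg lo hi lam f h Hlam Hf Hh Hpos b c Hc).
  unfold bih_poly.
  split.
  - intros [Hbih Hgeo]. split; [exact Hgeo |].
    destruct (Rmult_integral _ _ Hbih); [contradiction | assumption].
  - intros [Hd HP]. split; [rewrite HP; ring | exact Hd].
Qed.
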